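(* Let $f:\mathbb{R}^n\to\mathbb{R}^n$ be locally Lipschitz, and let $V_1,V_2\in C^1(\mathbb{R}^n)$, continuous $N_1,N_2:\mathbb{R}^n\to[0,\infty)$, and continuous $h:[0,\infty)\to[0,\infty)$ with $h(0)=0$ and $\sup_{r>0}h(r)/r<\infty$ satisfy $\nabla V_1\cdot f\le -N_1$ and $\nabla V_2\cdot f\le -N_2+h(N_1)$ on $\mathbb{R}^n$. Assume every solution is defined and bounded on $[0,\infty)$ and that along every solution the maps $t\mapsto N_i(x(t))$ are uniformly continuous. If $E:=\{x:N_1(x)=0,\ N_2(x)=0\}=\{x^\ast\}$ is a singleton, then $x^\ast$ is a globally asymptotically stable equilibrium of $\dot x=f(x)$.
   Context: $x^\ast$ is globally asymptotically stable if it is Lyapunov stable (for every neighborhood $U$ of $x^\ast$ there is a neighborhood $V\subset U$ such that solutions starting in $V$ remain in $U$ for all $t\ge0$) and every solution satisfies $x(t)\to x^\ast$ as $t\to\infty$. *)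

(* R : realType, R^n rendered as 'rV[R]_n (max norm). *)
From HB Require Import structures.
From mathcomp Require Import all_boot all_order all_algebra.
From mathcomp Require Import all_classical all_reals all_analysis.
Set Implicit Arguments. Unset Strict Implicit. Unset Printing Implicit Defensive.
Import Order.TTheory GRing.Theory Num.Theory.
Import numFieldNormedType.Exports.
Local Open Scope classical_set_scope.
Local Open Scope ring_scope.

Section Defs.
Context {R : realType} {n : nat}.
Local Notation V := 'rV[R]_n.

Definition locally_lipschitz (f : V -> V) : Prop :=
  forall x : V, exists r : R, 0 < r /\ exists K : R,
    forall y z : V, ball x r y -> ball x r z -> `|f y - f z| <= K * `|y - z|.

Definition C1 (W : V -> R) : Prop :=
  (forall x : V, differentiable W x) /\
  (forall v : V, continuous (fun x : V => 'd W x v)).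

Definition is_solution (f : V -> V) (x : R -> V) : Prop :=
  {within `[0, +oo[, continuous x} /\
  (forall t : R, 0 < t -> is_derive t 1 x (f (x t))).

Definition bounded_on_pos (x : R -> V) : Prop :=
  exists M : R, forall t : R, 0 <= t -> `|x t| <= M.

Definition unif_cont_on_pos (g : R -> R) : Prop :=
  forall e : R, 0 < e -> exists d : R, 0 < d /\
    forall s t : R, 0 <= s -> 0 <= t -> `|s - t| < d -> `|g s - g t| < e.

Definition lyapunov_stable (f : V -> V) (xs : V) : Prop :=
  forall U : set V, U \in nbhs xs -> exists2 W : set V, W \in nbhs xs & W `<=` U /\
    forall x : R -> V, is_solution f x -> W (x 0) -> forall t : R, 0 <= t -> U (x t).

Definition globally_asymptotically_stable (f : V -> V) (xs : V) : Prop :=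
  lyapunov_stable f xs /\
  forall x : R -> V, is_solution f x -> x @ +oo --> xs.

End Defs.

(* With K := |C| + 1, the function W := V2 + K V1 satisfies W'(x) <= -N(x) for
   N := N1 + N2, since the linear bound h(r) <= C r lets K V1 absorb the error term
   h(N1) of V2.  Along a solution, W is nonincreasing and, the solution being bounded,
   bounded below; uniform continuity of N along the solution then forces N(x(t)) -> 0
   (a Barbalat-type argument), and since N vanishes only at xs and the orbit stays in a
   compact set, x(t) -> xs.  Hence W(xs) <= W(x(t)) along every solution, and as W drops
   strictly at once along a solution starting off xs, xs is the strict global minimum of
   W: this yields Lyapunov stability, and forces the solution from xs to be constant,
   so that f(xs) = 0. *)

From HB Require Import structures.
From mathcomp Require Import all_boot all_order all_algebra.
From mathcomp Require Import all_classical all_reals all_analysis.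
From mathcomp Require Import lra.
Import Order.TTheory GRing.Theory Num.Theory.
Import numFieldNormedType.Exports.
Local Open Scope classical_set_scope.
Local Open Scope ring_scope.
Set Implicit Arguments. Unset Strict Implicit. Unset Printing Implicit Defensive.

Section NormedFacts.
Variables (R : realType) (V : normedModType R).

Lemma continuous_norm_subr (c : V) : continuous (fun y : V => `|y - c|).
Proof.
move=> y; apply: (continuous_comp (f := fun y : V => y - c)); last exact: norm_continuous.
by apply: continuousB; [exact: cvg_id | exact: cst_continuous].
Qed.

Lemma closed_norm_subr (c : V) (P : set R) :
  closed P -> closed [set y : V | P `|y - c|].
Proof. by move=> cP; exact: (continuous_closedP _).1 (@continuous_norm_subr c) P cP. Qed.

Lemma is_derive_diff_comp (W : V -> R) (x : R -> V) t v :
  differentiable W (x t) -> is_derive t 1 x v ->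
  is_derive t 1 (W \o x) ('d W (x t) v).
Proof.
move=> dW dx.
have dxt : differentiable x t by apply/derivable1_diffP; exact: ex_derive.
have dWx : differentiable (W \o x) t := differentiable_comp dxt dW.
apply: DeriveDef; first exact: diff_derivable.
rewrite deriveE // diff_comp //=; congr ('d W (x t) _).
by rewrite -deriveE //; exact: derive_val.
Qed.

End NormedFacts.

Lemma compact_lbound (T : topologicalType) (R : realType) (K : set T) (g : T -> R) :
  compact K -> continuous g -> exists m, forall y, K y -> m <= g y.
Proof.
move=> cK cg; have [K0|K0] := pselect (K !=set0); last first.
  by exists 0 => y Ky; case: K0; exists y.
have [c _ cmin] := compact_EVT_min K0 cK (continuous_subspaceT cg).
by exists (g c) => y Ky; apply: cmin; rewrite inE.
Qed.

Lemma compact_pos_lbound (T : topologicalType) (R : realType) (K : set T) (g : T -> R) :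
  compact K -> continuous g -> (forall y, K y -> 0 < g y) ->
  exists2 m, 0 < m & forall y, K y -> m <= g y.
Proof.
move=> cK cg gpos; have [K0|K0] := pselect (K !=set0); last first.
  by exists 1 => // y Ky; case: K0; exists y.
have [c /set_mem Kc cmin] := compact_EVT_min K0 cK (continuous_subspaceT cg).
by exists (g c); [exact: gpos | move=> y Ky; apply: cmin; rewrite inE].
Qed.

Lemma compact_closed_ballI (R : realType) (n : nat) (c : 'rV[R]_n) (r : R)
    (A : set 'rV[R]_n) :
  closed A -> compact ([set y | `|y - c| <= r] `&` A).
Proof.
move=> cA; apply: bounded_closed_compact; last first.
  by apply: closedI => //; exact: closed_norm_subr (@closed_le _ r).
exists (`|c| + r); split; first exact: num_real.
move=> M cM y [/= ycr _]; rewrite -(subrK c y); apply/ltW/(le_lt_trans (ler_normD _ _)).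
by move: cM ycr; lra.
Qed.

Section Dissipation.
Variables (R : realType) (w u : R -> R).
Hypothesis u_ge0 : forall t, 0 <= t -> 0 <= u t.
Hypothesis w_decay : forall a b, 0 <= a -> a < b ->
  exists2 c, a < c < b & w b - w a <= - u c * (b - a).

Lemma dissipation_nonincreasing a b : 0 <= a -> a <= b -> w b <= w a.
Proof.
move=> a0; rewrite le_eqVlt => /orP[/eqP-> // | ab].
have [c /andP[ac _] decay] := w_decay a0 ab.
have : 0 <= u c * (b - a).
  by rewrite mulr_ge0 ?u_ge0 ?subr_ge0 ?(ltW ab) ?(le_trans a0 (ltW ac)).
by move: decay; lra.
Qed.

Hypothesis u_unif_cont : unif_cont_on_pos u.

(* Uniform continuity keeps [u] above [e/2] for a fixed time [δ] after any time
   where [u >= e]. *)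
Lemma dissipation_drop e : 0 < e -> exists2 δ, 0 < δ &
  forall t, 0 <= t -> e <= u t -> w (t + δ) <= w t - e * δ / 2.
Proof.
move=> e0; have e20 : 0 < e / 2 by rewrite divr_gt0.
have [d [d0 ud]] := u_unif_cont e20.
exists (d / 2) => [|t t0 et]; first exact: divr_gt0.
have tδ : t < t + d / 2 by rewrite ltrDl divr_gt0.
have [c /andP[tc cδ] decay] := w_decay t0 tδ.
have : `|u c - u t| < e / 2.
  apply: ud; [exact: le_trans t0 (ltW tc) | exact: t0 |].
  by rewrite gtr0_norm ?subr_gt0 //; move: cδ d0; lra.
rewrite ltr_norml => /andP[uc _].
have : e / 2 * (d / 2) <= u c * (d / 2) by rewrite ler_pM2r ?divr_gt0 //; lra.
by move: decay; rewrite addrAC subrr add0r; lra.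
Qed.

Hypothesis w_lbound : exists B, forall t, 0 <= t -> B <= w t.

Lemma dissipation_vanishes e : 0 < e -> exists T, forall t, T <= t -> u t < e.
Proof.
move=> e0; have [δ δ0 drop] := dissipation_drop e0.
have [B wB] := w_lbound.
have winf : has_inf (w @` `[0, +oo[).
  split; first by exists (w 0), 0 => //=; rewrite in_itv /= lexx.
  by exists B => _ [t /= t0 <-]; apply: wB; move: t0; rewrite in_itv /= andbT.
have eδ : 0 < e * δ / 2 by rewrite !divr_gt0 ?mulr_gt0.
have [_ [T0 /= T00 <-] wT0] := inf_adherent eδ winf.
move: T00; rewrite in_itv /= andbT => T00.
exists T0 => t T0t; rewrite ltNge; apply/negP => et.
have t0 : 0 <= t := le_trans T00 T0t.
have : inf (w @` `[0, +oo[) <= w (t + δ).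
  apply: ge_inf; first by case: winf.
  by exists (t + δ) => //=; rewrite in_itv /= andbT addr_ge0 // ltW.
have := dissipation_nonincreasing T00 T0t.
by have := drop t t0 et; lra.
Qed.

End Dissipation.

Lemma unif_cont_on_posD (R : realType) (g1 g2 : R -> R) :
  unif_cont_on_pos g1 -> unif_cont_on_pos g2 -> unif_cont_on_pos (g1 \+ g2).
Proof.
move=> uc1 uc2 e e0; have e20 : 0 < e / 2 by rewrite divr_gt0.
have [d1 [d10 ucd1]] := uc1 _ e20; have [d2 [d20 ucd2]] := uc2 _ e20.
exists (Num.min d1 d2); split=> [|s t s0 t0]; first by rewrite lt_min d10 d20.
rewrite lt_min => /andP[std1 std2].
have := ucd1 _ _ s0 t0 std1; have := ucd2 _ _ s0 t0 std2.
have := ler_normD (g1 s - g1 t) (g2 s - g2 t).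
by rewrite /= addrACA -opprD; lra.
Qed.

Lemma le_mul_of_ratio_le (R : realType) (h : R -> R) (C : R) :
  h 0 = 0 -> (forall r, 0 < r -> h r / r <= C) -> forall r, 0 <= r -> h r <= C * r.
Proof.
move=> h0 hC r; rewrite le_eqVlt => /orP[/eqP<- | r0]; first by rewrite h0 mulr0.
by rewrite -ler_pdivrMr // hC.
Qed.

Lemma diff_lyapunov_combination (R : realType) (V : normedModType R) (F : V -> V)
    (V1 V2 N1 N2 : V -> R) (h : R -> R) (C : R) :
  (forall y, differentiable V1 y) -> (forall y, differentiable V2 y) ->
  (forall y, 0 <= N1 y) -> (forall r, 0 <= r -> h r <= C * r) ->
  (forall y, 'd V1 y (F y) <= - N1 y) ->
  (forall y, 'd V2 y (F y) <= - N2 y + h (N1 y)) ->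
  forall y, 'd (V2 + (`|C| + 1) *: V1) y (F y) <= - (N1 y + N2 y).
Proof.
move=> dV1 dV2 N1_ge0 hC V1F V2F y.
rewrite diffD ?diffZ //=; last exact: differentiableZ.
have KV1 : (`|C| + 1) *: 'd V1 y (F y) <= (`|C| + 1) * - N1 y.
  by rewrite ler_wpM2l ?addr_ge0 ?V1F.
have V2_le : 'd V2 y (F y) <= - N2 y + C * N1 y by rewrite (le_trans (V2F y)) // lerD2l hC.
have CN1 : C * N1 y <= `|C| * N1 y by rewrite ler_wpM2r ?ler_norm.
by move: (lerD V2_le KV1) CN1; rewrite mulrN mulrDl mul1r; lra.
Qed.

Section StrictLyapunov.
Variables (R : realType) (n : nat) (f : 'rV[R]_n -> 'rV[R]_n).
Variables (W N : 'rV[R]_n -> R) (xs : 'rV[R]_n).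
Local Notation V := 'rV[R]_n.
Hypothesis W_diff : forall y, differentiable W y.
Hypothesis N_cont : continuous N.
Hypothesis N_ge0 : forall y, 0 <= N y.
Hypothesis W_dissipative : forall y, 'd W y (f y) <= - N y.
Hypothesis N_eq0 : forall y, N y = 0 -> y = xs.
Hypothesis solution_exists : forall x0, exists x : R -> V, is_solution f x /\ x 0 = x0.
Hypothesis solution_bounded : forall x, is_solution f x -> bounded_on_pos x.
Hypothesis solution_unif_cont :
  forall x, is_solution f x -> unif_cont_on_pos (fun t => N (x t)).

Lemma W_continuous : continuous W.
Proof. by move=> y; apply: differentiable_continuous. Qed.

Lemma N_gt0 y : y != xs -> 0 < N y.
Proof. by move=> yxs; rewrite lt_def N_ge0 andbT; apply: contra yxs => /eqP/N_eq0->. Qed.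

Lemma solution_decay x : is_solution f x -> forall a b, 0 <= a -> a < b ->
  exists2 c, a < c < b & W (x b) - W (x a) <= - N (x c) * (b - a).
Proof.
move=> [xc xd] a b a0 ab.
have [||c cab ->] := @MVT R (W \o x) (fun c => 'd W (x c) (f (x c))) a b ab.
- move=> c; rewrite in_itv /= => /andP[ac _].
  by apply: is_derive_diff_comp => //; apply: xd; exact: le_lt_trans a0 ac.
- apply: (@continuous_subspaceW _ _ `[a, b] `[0, +oo[).
    by move=> t /=; rewrite !in_itv /= andbT => /andP[/(le_trans a0)].
  move=> t; apply: (continuous_comp (f := x : subspace `[0, +oo[ -> V)).
    exact: xc.
  exact: W_continuous.
exists c; first by move: cab; rewrite in_itv.
by apply: ler_wpM2r; [rewrite subr_ge0 ltW | exact: W_dissipative].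
Qed.

Lemma solution_W_nonincreasing x : is_solution f x ->
  forall a b, 0 <= a -> a <= b -> W (x b) <= W (x a).
Proof.
by move=> sx; apply: (dissipation_nonincreasing (u := fun t => N (x t))) => //;
  exact: solution_decay.
Qed.

Lemma solution_N_vanishes x : is_solution f x ->
  forall e, 0 < e -> exists T, forall t, T <= t -> N (x t) < e.
Proof.
move=> sx; apply: (dissipation_vanishes (w := fun t => W (x t))) => //.
- exact: solution_decay.
- exact: solution_unif_cont.
have [M xM] := solution_bounded sx.
have cB : compact ([set y : V | `|y - 0| <= M] `&` setT).
  exact: compact_closed_ballI closedT.
have [B WB] := compact_lbound cB W_continuous.
by exists B => t t0; apply: WB; split => //=; rewrite subr0 xM.
Qed.

Lemma solution_cvg x : is_solution f x -> x @ +oo --> xs.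
Proof.
move=> sx; apply/cvgrPdist_lt => eps eps0.
have [M xM] := solution_bounded sx.
pose K := [set y : V | `|y - 0| <= M] `&` [set y | eps <= `|y - xs|].
have cK : compact K.
  by apply: compact_closed_ballI; exact: closed_norm_subr (@closed_ge _ eps).
have [m m0 Km] : exists2 m, 0 < m & forall y, K y -> m <= N y.
  apply: compact_pos_lbound => // y [_ /= epsy]; apply: N_gt0.
  by apply: contraTneq epsy => ->; rewrite subrr normr0 -ltNge.
have [T NT] := solution_N_vanishes sx m0.
exists (Num.max T 0); split; first exact: num_real.
move=> t /=; rewrite gt_max => /andP[Tt t0].
rewrite distrC ltNge; apply/negP => epst.
have : m <= N (x t) by apply: Km; split => //=; rewrite subr0 xM // ltW.
by rewrite leNgt NT // ltW.
Qed.

Lemma W_gt_equilibrium z : z != xs -> W xs < W z.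
Proof.
move=> zxs; have [x [sx x0]] := solution_exists z.
have [δ δ0 drop] :=
  dissipation_drop (solution_decay sx) (solution_unif_cont sx) (N_gt0 zxs).
have Wlim : W xs <= W (x δ).
  apply: (cvgr_to_le (F := +oo) (f := fun t => W (x t))).
    exact: (@cvg_comp _ _ _ x W _ _ _ (solution_cvg sx) (@W_continuous xs)).
  near=> t; apply: (solution_W_nonincreasing sx); [exact: ltW δ0 | near: t].
  exact: nbhs_pinfty_ge (num_real _).
have := drop 0 (lexx 0); rewrite add0r x0 lexx => /(_ isT).
have : 0 < N z * δ / 2 by rewrite !divr_gt0 ?mulr_gt0 ?N_gt0.
by move: Wlim; lra.
Unshelve. all: by end_near.
Qed.

Lemma equilibrium_fixed : f xs = 0.
Proof.
have [x [sx x0]] := solution_exists xs.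
have x_const t : 0 <= t -> x t = xs.
  move=> t0; apply: contraTeq (solution_W_nonincreasing sx (lexx 0) t0).
  by move=> /W_gt_equilibrium; rewrite x0 ltNge.
have x_near1 : \forall t \near (1 : R), x t = cst xs t.
  by near=> t; apply: x_const; near: t; exact: lt_le_nbhsr ltr01.
have := near_eq_is_derive x_near1 ((proj2 sx) 1 ltr01).
rewrite x_const ?ler01 // => dx1.
by have := @derive_val _ _ _ _ _ _ _ dx1; rewrite derive_cst.
Unshelve. all: by end_near.
Qed.

Lemma W_gap_on_sphere r : 0 < r ->
  exists2 m, 0 < m & forall y, `|y - xs| = r -> m <= W y - W xs.
Proof.
move=> r0.
pose S := [set y : V | `|y - xs| <= r] `&` [set y | r <= `|y - xs|].
have cS : compact S.
  by apply: compact_closed_ballI; exact: closed_norm_subr (@closed_ge _ r).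
have [m m0 Sm] : exists2 m, 0 < m & forall y, S y -> m <= W y - W xs.
  apply: compact_pos_lbound => //.
    by move=> y; apply: continuousB; [exact: W_continuous | exact: cst_continuous].
  move=> y [_ /= ry]; rewrite subr_gt0 W_gt_equilibrium //.
  by apply: contraTneq ry => ->; rewrite subrr normr0 -ltNge.
by exists m => // y yr; apply: Sm; rewrite /S /= yr lexx.
Qed.

(* By the intermediate value theorem a solution leaving the ball would meet the
   sphere, where [W] is too large. *)
Lemma solution_confined r m x :
  (forall y, `|y - xs| = r -> m <= W y - W xs) ->
  is_solution f x -> `|x 0 - xs| < r -> W (x 0) - W xs < m ->
  forall t, 0 <= t -> `|x t - xs| < r.
Proof.
move=> gap sx x0r Wx0 t t0; rewrite ltNge; apply/negP => rt.
have [||c c0t xcr] := @IVT R (fun s => `|x s - xs|) 0 t r t0.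
- apply: (@continuous_subspaceW _ _ `[0, t] `[0, +oo[).
    by move=> s /=; rewrite !in_itv /= andbT => /andP[].
  move=> s; apply: (continuous_comp (f := x : subspace `[0, +oo[ -> V)
                                     (g := fun y => `|y - xs|)).
    exact: (proj1 sx).
  exact: continuous_norm_subr.
- by rewrite ge_min le_max rt orbT andbT (ltW x0r).
move: c0t; rewrite in_itv /= => /andP[c0 _].
by have := gap _ xcr; have := solution_W_nonincreasing sx (lexx 0) c0; lra.
Qed.

Lemma equilibrium_lyapunov_stable : lyapunov_stable f xs.
Proof.
move=> U; rewrite inE => /nbhs_ballP [e /= e0 eU].
have e20 : 0 < e / 2 by rewrite divr_gt0.
have [m m0 gap] := W_gap_on_sphere e20.
have /cvgrPdist_lt /(_ m m0) /nbhs_ballP [d /= d0 dW] := @W_continuous xs.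
pose δ := Num.min d (e / 2).
have δd : δ <= d by rewrite ge_min lexx.
have δe : δ <= e / 2 by rewrite ge_min lexx orbT.
exists (ball xs δ); first by rewrite inE; apply: nbhsx_ballx; rewrite lt_min d0 e20.
split.
  by apply: subset_trans eU; apply: le_ball; move: δe e0; lra.
move=> x sx; rewrite -ball_normE /= => x0δ t t0; apply: eU.
rewrite -ball_normE /= distrC.
suff : `|x t - xs| < e / 2 by lra.
apply: (solution_confined gap sx) => //; first by rewrite distrC; move: x0δ δe; lra.
have : ball xs d (x 0) by rewrite -ball_normE /=; move: x0δ δd; lra.
by move/dW; rewrite /= ltr_norml; lra.
Qed.

Theorem strict_lyapunov_gas : f xs = 0 /\ globally_asymptotically_stable f xs.
Proof.
split; first exact: equilibrium_fixed.
by split; [exact: equilibrium_lyapunov_stable | exact: solution_cvg].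
Qed.

End StrictLyapunov.

Theorem corollary2p8 (R : realType) (n : nat) (f : 'rV[R]_n -> 'rV[R]_n)
  (V1 V2 N1 N2 : 'rV[R]_n -> R) (h : R -> R) (xs : 'rV[R]_n) :
  locally_lipschitz f ->
  C1 V1 -> C1 V2 ->
  continuous N1 -> continuous N2 ->
  (forall x, 0 <= N1 x) -> (forall x, 0 <= N2 x) ->
  {within `[0, +oo[, continuous h} ->
  (forall r, 0 <= r -> 0 <= h r) -> h 0 = 0 ->
  (exists C : R, forall r, 0 < r -> h r / r <= C) ->
  (forall x, 'd V1 x (f x) <= - N1 x) ->
  (forall x, 'd V2 x (f x) <= - N2 x + h (N1 x)) ->
  (forall x0, exists x : R -> 'rV[R]_n, is_solution f x /\ x 0 = x0) ->
  (forall x, is_solution f x -> bounded_on_pos x) ->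
  (forall x, is_solution f x ->
     unif_cont_on_pos (fun t => N1 (x t)) /\ unif_cont_on_pos (fun t => N2 (x t))) ->
  [set x | N1 x = 0 /\ N2 x = 0] = [set xs] ->
  f xs = 0 /\ globally_asymptotically_stable f xs.
Proof.
move=> _ [dV1 _] [dV2 _] cN1 cN2 N1_ge0 N2_ge0 _ _ h0 [C hC] V1f V2f.
move=> sol_ex sol_bd sol_uc E.
pose W := V2 + (`|C| + 1) *: V1.
have W_diff y : differentiable W y by apply: differentiableD => //; exact: differentiableZ.
have N_cont : continuous (N1 \+ N2).
  by move=> y; apply: continuousD; [exact: cN1 | exact: cN2].
have N_ge0 y : 0 <= (N1 \+ N2) y by rewrite addr_ge0.
have W_dissipative y : 'd W y (f y) <= - (N1 \+ N2) y.
  exact: diff_lyapunov_combination dV1 dV2 N1_ge0 (le_mul_of_ratio_le h0 hC) V1f V2f y.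
have N_eq0 y : (N1 \+ N2) y = 0 -> y = xs.
  move=> /eqP; rewrite paddr_eq0 // => /andP[/eqP N1y /eqP N2y].
  by have : [set x | N1 x = 0 /\ N2 x = 0] y by []; rewrite E.
have N_uc x : is_solution f x -> unif_cont_on_pos (fun t => (N1 \+ N2) (x t)).
  by move=> /sol_uc[]; exact: unif_cont_on_posD.
exact: strict_lyapunov_gas W_diff N_cont N_ge0 W_dissipative N_eq0 sol_ex sol_bd N_uc.
Qed.
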